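(* Let $B=(T,D,\lambda)$ be an upwards closed quasi-bush containing no coat hangers and let $w\in V(T)$. Then every node $v\in\mathrm{OUT}(w,B)$ with $v\neq w$ is a child of $w$ in $T$.
   Context: A quasi-bush $B=(T,D,\lambda)$: a rooted tree $T$, a set $D$ of pointers from leaves of $T$ to nodes of $T$ (every leaf points to the root), and $\lambda\colon D\to\{0,1\}$. $v\le_T w$ means $v$ is an ancestor of $w$ (including $v=w$); $T(a)$ is the subtree of descendants of $a$. $G(B)$ is the directed graph on the leaves of $T$ where, for distinct leaves $u,v$ and $w$ the lowest ancestor of $v$ with $(u,w)\in D$, $(u,v)$ is an arc iff $\lambda((u,w))=1$; this $w$ is the connection point of $(u,v)$. $B$ is upwards closed if $(u,w)\in D$ and $w'\le_T w$ imply $(u,w')\in D$. A coat hanger is a subtree $T(a)$ such that $a$ is not the root, $a$ is not a leaf, and there is a leaf $v$ with $(v,p)\in D$, $\lambda((v,p))=1$ for the parent $p$ of $a$, and $v$ has no pointer to any node of $T(a)$. $\mathrm{OUT}(w,B)$ is the set of all $v$ such that $w$ is the connection point of some arc $(u,v)$ of $G(B)$. *)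

From mathcomp Require Import all_boot.
Set Implicit Arguments.
Unset Strict Implicit.
Unset Printing Implicit Defensive.

(* A finite rooted tree on a finite node type V, given by a root and a parent
   map; the root is its own parent and every node reaches the root by
   iterating parent (so there are no cycles other than the root loop). *)
Record rtree (V : finType) := RTree {
  root : V;
  parent : V -> V;
  parent_root : parent root = root;
  reach_root : forall v : V, exists k, iter k parent v = root
}.

Section Tree.
Variables (V : finType) (T : rtree V).

Definition anc (v w : V) : Prop := exists k, iter k (parent T) w = v.

Definition is_child (c p : V) : Prop := c <> root T /\ parent T c = p.

Definition is_leaf (v : V) : Prop := forall c, ~ is_child c v.
End Tree.

(* A quasi-bush B = (T, D, lambda). D is a set of pointers (u, w) given as a
   relation; lambda is only meaningful on D. *)
Record quasi_bush (V : finType) := QuasiBush {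
  qtree : rtree V;
  D : V -> V -> Prop;
  lam : V -> V -> bool;
  D_from_leaf : forall u w, D u w -> is_leaf qtree u;
  leaf_to_root : forall u, is_leaf qtree u -> D u (root qtree)
}.

Section Bush.
Variables (V : finType) (B : quasi_bush V).
Local Notation T := (qtree B).

Definition conn_point (u v w : V) : Prop :=
  anc T w v /\ D B u w /\ (forall w', anc T w' v -> D B u w' -> anc T w' w).

Definition arc (u v : V) : Prop :=
  is_leaf T u /\ is_leaf T v /\ u <> v /\
  exists w, conn_point u v w /\ lam B u w = true.

Definition OUT (w v : V) : Prop :=
  exists u, arc u v /\ conn_point u v w.

Definition upwards_closed : Prop :=
  forall u w w', D B u w -> anc T w' w -> D B u w'.

(* T(a) is a coat hanger *)
Definition coat_hanger (a : V) : Prop :=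
  a <> root T /\ ~ is_leaf T a /\
  exists v, is_leaf T v /\ D B v (parent T a) /\ lam B v (parent T a) = true /\
            (forall x, anc T a x -> ~ D B v x).

Definition no_coat_hangers : Prop := forall a, ~ coat_hanger a.
End Bush.

From Pilot Require Import Defs.
From mathcomp Require Import all_boot.

Set Implicit Arguments.
Unset Strict Implicit.
Unset Printing Implicit Defensive.

(* Let w be the connection point of an arc (u, v) with v <> w; then w is an
   ancestor of v, and we let a be the child of w on the path to v.  If a <> v,
   then a is not a leaf, and u has no pointer into T(a): by upward closure such
   a pointer would give (u, a) in D, so a would be an ancestor of v lower than
   the connection point w.  As lambda(u, w) = 1 and w is the parent of a, the
   subtree T(a) would be a coat hanger. *)

Section RootedTree.
Variables (V : finType) (T : rtree V).

Lemma iter_parent_root_stable m j y :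
  iter m (parent T) y = Defs.root T -> m <= j -> iter j (parent T) y = Defs.root T.
Proof. by move=> hm /subnK <-; rewrite iterD hm; apply/iter_fix/parent_root. Qed.

Lemma anc_parent x : anc T (parent T x) x.
Proof. by exists 1. Qed.

(* Going round the cycle y -> x -> y often enough carries y past the point
   where its iterates have reached the root, so y is the root. *)
Lemma anc_antisym x y : anc T x y -> anc T y x -> x = y.
Proof.
move=> [k hk] [l hl].
have cyc : iter (l + k) (parent T) y = y by rewrite iterD hk.
have [/eqP | lk_gt0] := posnP (l + k).
  by rewrite addn_eq0 => /andP [_ /eqP k0]; rewrite -hk k0.
have [m hm] := reach_root T y.
have y_root : y = Defs.root T.
  rewrite -[LHS](iter_fix m cyc) -iterM.
  by apply: (iter_parent_root_stable hm); rewrite leq_pmulr.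
by rewrite -hk y_root; apply/iter_fix/parent_root.
Qed.

Lemma child_neq_parent c q : is_child T c q -> c <> q.
Proof.
move=> [c_root pc] cq; subst q; have [k hk] := reach_root T c.
by apply: c_root; rewrite -hk iter_fix.
Qed.

Lemma anc_child_anc w v :
  anc T w v -> v <> w -> exists2 a, is_child T a w & anc T a v.
Proof.
move=> hwv vw.
have ex : exists k, iter k (parent T) v == w.
  by case: hwv => k hk; exists k; apply/eqP.
case: (ex_minnP ex) => -[/eqP // | k /eqP hk kmin].
exists (iter k (parent T) v); last by exists k.
split=> // a_root; have := kmin k.
by rewrite -hk iterS a_root parent_root eqxx ltnn => /(_ isT).
Qed.

Lemma anc_proper_not_leaf a v : anc T a v -> v <> a -> ~ is_leaf T a.
Proof. by move=> hav va leaf_a; case: (anc_child_anc hav va) => c /leaf_a. Qed.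

End RootedTree.

Section QuasiBush.
Variables (V : finType) (B : quasi_bush V).
Local Notation T := (qtree B).

Lemma conn_point_unique u v w w' :
  conn_point B u v w -> conn_point B u v w' -> w = w'.
Proof.
move=> [anc_wv [Duw minw]] [anc_w'v [Duw' minw']].
exact: anc_antisym (minw' w anc_wv Duw) (minw w' anc_w'v Duw').
Qed.

Lemma arc_lam_conn_point u v w :
  Defs.arc B u v -> conn_point B u v w -> lam B u w.
Proof. by move=> [_ [_ [_ [w0 [c0 lam0]]]]] cw; rewrite -(conn_point_unique c0 cw). Qed.

Hypothesis up : upwards_closed B.

Lemma conn_point_child_no_pointer u v w a :
  conn_point B u v w -> is_child T a w -> anc T a v ->
  forall x, anc T a x -> ~ Defs.D B u x.
Proof.
move=> [_ [_ minw]] child_a hav x hax Dx.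
have aw : anc T a w := minw a hav (up Dx hax).
apply: (child_neq_parent child_a); apply: anc_antisym aw _.
by case: child_a => _ <-; apply: anc_parent.
Qed.

Lemma conn_point_child_coat_hanger u v w a :
  is_leaf T u -> conn_point B u v w -> lam B u w ->
  is_child T a w -> anc T a v -> v <> a -> coat_hanger B a.
Proof.
move=> leaf_u cw lam_uw child_a hav va.
have [a_root pa] := child_a.
split=> //; split; first exact: anc_proper_not_leaf hav va.
exists u; rewrite pa; split=> //; split; first by case: cw => _ [].
by split=> //; apply: conn_point_child_no_pointer cw child_a hav.
Qed.

End QuasiBush.

Theorem lemma7p31 (V : finType) (B : quasi_bush V) :
  upwards_closed B -> no_coat_hangers B ->
  forall w v : V, OUT B w v -> v <> w -> is_child (qtree B) v w.
Proof.
move=> up no_ch w v [u [uv_arc cw]] vw.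
have [a child_a hav] := anc_child_anc (proj1 cw) vw.
have [-> // | /eqP va] := eqVneq v a.
have leaf_u : is_leaf (qtree B) u by case: uv_arc.
have lam_uw := arc_lam_conn_point uv_arc cw.
by case: (no_ch a (conn_point_child_coat_hanger up leaf_u cw lam_uw child_a hav va)).
Qed.
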